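(* Consider the following market. There are $n\ge 3$ agents $[n]=\{1,\dots,n\}$ and a seller with an unlimited supply of an identical good (at most one copy per agent, zero production cost). Each agent $i$ has a private valuation function $v_i:2^{[n]}\to\mathbb{R}$ on possible winning sets $S\subseteq[n]$, satisfying: $v_i(S)\ge 0$; $v_i(S)=0$ if $i\notin S$; $v_i(S)\le v_i(R)$ whenever $S\subseteq R$; and $v_i(S\cup R)\le v_i(S)+v_i(R)$ for all $S,R\subseteq[n]$ with $i\in S\cap R$. Agents report bid functions $b_i$. Define the mechanism $\mathcal{M}$ as follows. 1. Independently and uniformly at random put every agent into one of three sets $A,B,C$. 2. For $X\in\{A,B\}$ let $r_X(C)=\max\{c\cdot|T| : c\ge 0,\ T\subseteq C,\ b_i(T\cup X)\ge c \text{ for all } i\in T\}$, and let $r(C)=\max\{r_A(C),r_B(C)\}$. 3. Give the good to every agent of $A$ for free. 4. Run the cost-sharing procedure with $r=r(C)$: set $S\leftarrow B$; repeat: let $T=\{i\in S : b_i(S\cup A)<r/|S|\}$ and set $S\leftarrow S\setminus T$, until $T=\emptyset$. If $S\neq\emptyset$, sell the good to every agent of $S$ at price $r/|S|$. Agents of $C$ and unsold agents of $B$ get nothing and pay nothing. Then $\mathcal{M}$ is universally truthful, and when all agents bid truthfully ($b_i=v_i$) its expected revenue is at least $\mathcal{F}^{(3)}(v)/324$, where $\mathcal{F}^{(3)}(v)=\max\{c\cdot|S| : c\ge 0,\ S\subseteq[n],\ |S|\ge 3,\ v_i(S)\ge c\text{ for all } i\in S\}$.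
   Context: For a deterministic mechanism selecting a winning set $S$ and prices $p_i$ for $i\in S$ (others pay $0$), agent $i$'s utility is $v_i(S)-p_i$ if $i\in S$ and $0$ otherwise; the revenue is $\sum_{i\in S}p_i$. A deterministic mechanism is truthful if for every agent $i$ and every fixed reports of the others, reporting $b_i=v_i$ maximizes $i$'s utility. A randomized mechanism is universally truthful if it is a probability distribution over deterministic truthful mechanisms. *)

From HB Require Import structures.
From mathcomp Require Import all_boot all_order all_algebra.
From mathcomp Require Import boolp classical_sets reals.
Import Order.TTheory GRing.Theory Num.Theory.
Local Open Scope ring_scope.
Local Open Scope classical_set_scope.

Set Implicit Arguments.
Unset Strict Implicit.
Unset Printing Implicit Defensive.

(* Agents are 'I_n = {0,...,n-1} (standing for [n]).  A (bid or valuation)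
   function of one agent maps winning sets S ⊆ [n] to reals. *)
Definition setfun (R : realType) (n : nat) := {set 'I_n} -> R.
Definition profile (R : realType) (n : nat) := 'I_n -> setfun R n.

Definition valuation_ok (R : realType) (n : nat) (i : 'I_n) (v : setfun R n) : Prop :=
  [/\ (forall S : {set 'I_n}, 0 <= v S),
      (forall S : {set 'I_n}, i \notin S -> v S = 0),
      (forall S T : {set 'I_n}, S \subset T -> v S <= v T)
    & (forall S T : {set 'I_n}, i \in S :&: T -> v (S :|: T) <= v S + v T)].

Definition upd (R : realType) (n : nat) (b : profile R n) (i : 'I_n) (bi : setfun R n)
  : profile R n := fun j => if j == i then bi else b j.

(* An outcome of a deterministic mechanism: a winning set and the prices
   (prices of non-winners are irrelevant / 0). *)
Definition outcome (R : realType) (n : nat) := ({set 'I_n} * ('I_n -> R))%type.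

Definition utility (R : realType) (n : nat) (i : 'I_n) (v : setfun R n)
  (o : outcome R n) : R :=
  if i \in o.1 then v o.1 - o.2 i else 0.

Definition revenue (R : realType) (n : nat) (o : outcome R n) : R :=
  \sum_(i in o.1) o.2 i.

Definition truthful (R : realType) (n : nat) (M : profile R n -> outcome R n) : Prop :=
  forall (i : 'I_n) (vi : setfun R n), valuation_ok i vi ->
  forall (b : profile R n) (bi : setfun R n),
    utility i vi (M (upd b i bi)) <= utility i vi (M (upd b i vi)).

(* A random partition into A, B, C: a map 'I_n -> 'I_3 (0 = A, 1 = B, 2 = C),
   all 3^n maps being equally likely. *)
Definition grp (n : nat) (p : {ffun 'I_n -> 'I_3}) (k : nat) : {set 'I_n} :=
  [set i | nat_of_ord (p i) == k].

(* r_X(C) = max { c |T| : c >= 0, T ⊆ C, b_i(T ∪ X) >= c for all i in T }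
   (the maximum exists; it is the supremum of this set of reals). *)
Definition r_X (R : realType) (n : nat) (b : profile R n) (X C : {set 'I_n}) : R :=
  sup [set x : R | exists (c : R) (T : {set 'I_n}),
         [/\ 0 <= c, T \subset C, (forall i, i \in T -> c <= b i (T :|: X))
           & x = c * #|T|%:R]].

Definition cs_step (R : realType) (n : nat) (b : profile R n) (A : {set 'I_n}) (r : R)
  (S : {set 'I_n}) : {set 'I_n} :=
  S :\: [set i in S | b i (S :|: A) < r / #|S|%:R].

(* Repeat until no agent is removed: each non-final round removes at least one
   agent of B ⊆ [n], so after n rounds the fixed point is reached. *)
Definition cs_final (R : realType) (n : nat) (b : profile R n) (A B : {set 'I_n}) (r : R)
  : {set 'I_n} := iter n (cs_step b A r) B.

Definition mech (R : realType) (n : nat) (p : {ffun 'I_n -> 'I_3}) (b : profile R n)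
  : outcome R n :=
  let A := grp p 0 in
  let B := grp p 1 in
  let C := grp p 2 in
  let r := Num.max (r_X b A C) (r_X b B C) in
  let S := cs_final b A B r in
  (A :|: S, fun i => if i \in S then r / #|S|%:R else 0).

Definition exp_revenue (R : realType) (n : nat) (b : profile R n) : R :=
  (3 ^ n)%:R^-1 * \sum_(p : {ffun 'I_n -> 'I_3}) revenue (mech p b).

Definition F3 (R : realType) (n : nat) (v : profile R n) : R :=
  sup [set x : R | exists (c : R) (S : {set 'I_n}),
         [/\ 0 <= c, (3 <= #|S|)%N, (forall i, i \in S -> c <= v i S)
           & x = c * #|S|%:R]].

From HB Require Import structures.
From mathcomp Require Import boolp classical_sets reals.
From mathcomp Require Import all_boot all_order all_algebra.
From mathcomp Require Import fingroup perm.
From mathcomp Require Import zify ring lra.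
Import Order.TTheory GRing.Theory Num.Theory.
Local Open Scope ring_scope.

Set Implicit Arguments.
Unset Strict Implicit.
Unset Printing Implicit Defensive.

(* Truthfulness: agents of A and C cannot influence their own outcome, and for an agent of B
   the runs of the cost-sharing procedure under the true and under a deviating bid coincide until
   the first round that treats the agent differently; from then on the deviating agent either loses
   the good or pays more than its value for it.
   Revenue: let c and S attain F^(3), with k = |S|.  For each partition relabel (A, B, C) as
   (X, Z, Y) so that r_X(X, Z) is the largest of the six values r_X(., .); then the mechanism run
   on (X, Z, Y) surely collects max (r_X(X, Y), r_X(Z, Y)) >= c |S ∩ Y| / 4: split S ∩ Y into a
   maximal part that can pay c/2 each together with X, and a rest that, by subadditivity, can pay
   c/2 each together with Z.  Averaging over the six relabellings and using
   4 a b y <= y (a + b + y - 1)^2 for the sizes a, b, y of S ∩ X, S ∩ Z, S ∩ Y, the bound follows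
   from E[|S ∩ A| |S ∩ B| |S ∩ C|] = k (k-1) (k-2) / 27. *)

Lemma prod_nat_bool (I : finType) (B : pred I) : (\prod_i (B i : nat))%N = [forall i, B i].
Proof.
have [/forallP allB | /forallPn[i nBi]] := boolP [forall i, B i].
  by rewrite big1 // => i _; rewrite allB.
by rewrite (bigD1 i) //= (negbTE nBi).
Qed.

Lemma card_sum_bool (I : finType) (P : {pred I}) : #|P| = (\sum_i (i \in P : nat))%N.
Proof. by rewrite -sum1_card big_mkcond /=; apply: eq_bigr => i _; case: (i \in P). Qed.

Lemma ord3P (j : 'I_3) : [\/ j = 0, j = 1 | j = 2].
Proof.
by case: j => -[|[|[|m]]] lt_j //; [apply: Or31 | apply: Or32 | apply: Or33]; apply: val_inj.
Qed.

Lemma big_ord3 (T : Type) (idx : T) (op : T -> T -> T) (F : 'I_3 -> T) :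
  \big[op/idx]_(j < 3) F j = op (F 0) (op (F 1) (op (F 2) idx)).
Proof.
by rewrite !big_ord_recl big_ord0; congr (op (F _) (op (F _) (op (F _) _))); apply: val_inj.
Qed.

Lemma amgm3_pred (R : realFieldType) (x y z : nat) :
  4 * (x%:R * (y%:R * z%:R)) <= z%:R * ((x + y + z)%:R - 1) ^+ 2 :> R.
Proof.
have [x0 y0] : 0 <= x%:R :> R /\ 0 <= y%:R :> R by split; apply: ler0n.
case: z => [|z]; first by rewrite mulr0n !mulr0 mul0r.
rewrite !natrD -natr1; have z0 : 0 <= z%:R :> R by apply: ler0n.
have amgm : 4 * (x%:R * y%:R) <= (x%:R + y%:R) ^+ 2 :> R.
  by have := sqr_ge0 (x%:R - y%:R : R); rewrite !expr2; nra.
rewrite !expr2 in amgm *; nra.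
Qed.

Section ShrinkingIteration.
Variables (T : finType) (f : {set T} -> {set T}).
Hypothesis f_sub : forall S, f S \subset S.

Lemma iter_fixed_or_card (S : {set T}) k :
  f (iter k f S) = iter k f S \/ (#|iter k f S| + k <= #|S|)%N.
Proof.
elim: k => [|k IH]; first by right; rewrite addn0.
have [fixed|moved] := eqVneq (f (iter k f S)) (iter k f S).
  by left; rewrite /= fixed fixed.
right; case: IH => [/eqP|le_k]; first by rewrite (negbTE moved).
rewrite /= addnS; apply: leq_trans le_k; rewrite ltn_add2r.
by rewrite proper_card // properEneq moved f_sub.
Qed.

Lemma iter_fixed (S : {set T}) k : (#|S| <= k)%N -> f (iter k f S) = iter k f S.
Proof.
move=> le_S; have [//|small] := iter_fixed_or_card S k.
by apply/eqP; rewrite eqEcard f_sub /=; lia.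
Qed.

End ShrinkingIteration.

Lemma ler_pdiv_card_subset (R : numFieldType) (T : finType) (r : R) (S1 S2 : {set T}) :
  0 <= r -> (0 < #|S1|)%N -> S1 \subset S2 -> r / #|S2|%:R <= r / #|S1|%:R.
Proof.
move=> r0 S1_0 S12; have S2_0 := leq_trans S1_0 (subset_leq_card S12).
by rewrite ler_wpM2l // lef_pV2 ?posrE ?ltr0n // ler_nat subset_leq_card.
Qed.

Section Counting.
Variables (D L : finType).
Local Open Scope nat_scope.

(* [p] is forced on the image of [f] and free elsewhere. *)
Lemma card_left_inverses (f : L -> D) :
  #|[set p : {ffun D -> L} | [forall l, p (f l) == l]]| =
  injectiveb f * #|L| ^ (#|D| - #|L|).
Proof.
have [f_inj | /injectiveP f_ninj] := boolP (injectiveb f); last first.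
  apply/eqP; rewrite cards_eq0; apply/eqP/setP => p; rewrite !inE.
  apply/negbTE/forallP => pf; apply: f_ninj; apply: (@can_inj _ _ _ p) => l.
  exact/eqP.
move/injectiveP: f_inj => f_inj; rewrite mul1n.
set im := f @: [set: L].
pose H x l := ((x \in im) ==> (f l == x) : nat).
transitivity (\sum_(p : {ffun D -> L}) \prod_x H x (p x)).
  rewrite card_sum_bool; apply: eq_bigr => p _.
  rewrite prod_nat_bool inE; congr (nat_of_bool _); apply/forallP/forallP => /= pf x.
    by apply/implyP => /imsetP[l _ ->]; rewrite (eqP (pf l)).
  by have := pf (f x); rewrite imset_f ?inE //= (inj_eq f_inj).
rewrite -bigA_distr_bigA /=.
transitivity (\prod_x (if x \in im then 1 else #|L|)).
  apply: eq_bigr => x _; rewrite /H; case: (boolP (x \in im)) => [/imsetP[l0 _ ->]|_] /=.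
    rewrite (bigD1 l0) //= eqxx big1 // => l /negbTE.
    by rewrite (inj_eq f_inj) => ->.
  by rewrite sum1_card.
rewrite (bigID (mem im)) /= big1 ?mul1n => [|x ->//].
rewrite (eq_bigr (fun=> #|L|)) => [|x /negbTE ->//].
rewrite (eq_bigl (mem (~: im))) => [|x]; last by rewrite /= inE.
rewrite prod_nat_const; congr (_ ^ _).
by have := cardsC im; rewrite card_imset // cardsT => <-; rewrite addKn.
Qed.

(* Expanding the product turns each term into a count of pairs (g, p), g picking a point of [S]
   in every fibre of [p]; such a g is injective with left inverse [p]. *)
Lemma sum_prod_card_fibres (S : {set D}) :
  \sum_(p : {ffun D -> L}) \prod_l #|[set x in S | p x == l]| =
  #|S| ^_ #|L| * #|L| ^ (#|D| - #|L|).
Proof.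
transitivity (\sum_(p : {ffun D -> L}) \sum_(g : {ffun L -> D})
                \prod_l ((g l \in S) && (p (g l) == l) : nat)).
  apply: eq_bigr => p _.
  rewrite (eq_bigr (fun l => \sum_x ((x \in S) && (p x == l) : nat))); last first.
    by move=> l _; rewrite card_sum_bool; apply: eq_bigr => x _; rewrite inE.
  exact: bigA_distr_bigA.
rewrite exchange_big /=.
transitivity (\sum_(g : {ffun L -> D})
                ((g \in ffun_on S) && injectiveb g) * #|L| ^ (#|D| - #|L|)).
  apply: eq_bigr => g _.
  have -> : ((g \in ffun_on S) && injectiveb g) * #|L| ^ (#|D| - #|L|) =
            (g \in ffun_on S) * #|[set p : {ffun D -> L} | [forall l, p (g l) == l]]|.
    by rewrite card_left_inverses mulnA mulnb.
  rewrite card_sum_bool big_distrr /=; apply: eq_bigr => p _.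
  rewrite prod_nat_bool !inE mulnb; congr (nat_of_bool _).
  apply/forallP/andP => [gp | [/forallP gS /forallP gp] l]; last by rewrite gS gp.
  by split; apply/forallP => l; case/andP: (gp l).
rewrite -big_distrl /= -card_sum_bool -card_inj_ffuns_on; congr (_ * _).
by apply: eq_card => g; rewrite inE.
Qed.

Lemma sum_card_fibres (S : {set D}) (p : D -> L) :
  \sum_l #|[set x in S | p x == l]| = #|S|.
Proof.
rewrite [RHS]card_sum_bool (eq_bigr (fun x => \sum_l ((x \in S) && (p x == l) : nat))).
  rewrite exchange_big; apply: eq_bigr => l _.
  by rewrite card_sum_bool; apply: eq_bigr => x _; rewrite inE.
move=> x _; rewrite (bigD1 (p x)) //= eqxx andbT big1 ?addn0 // => l pl.
by rewrite eq_sym (negbTE pl) andbF.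
Qed.

End Counting.

Section RX.
Variables (R : realType) (n : nat).
Implicit Types (b : profile R n) (X C T : {set 'I_n}).

Definition r_set b X C : set R := [set x : R | exists (c : R) (T : {set 'I_n}),
  [/\ 0 <= c, T \subset C, (forall i, i \in T -> c <= b i (T :|: X))
    & x = c * #|T|%:R]]%classic.

Lemma r_set_bounded b X C : has_ubound (r_set b X C).
Proof.
pose M := \big[Num.max/0]_(T : {set 'I_n}) \big[Num.max/0]_(i : 'I_n) b i (T :|: X).
exists (n%:R * M) => _ [c [T [c0 _ cT ->]]].
have [->|[i iT]] := set_0Vmem T; first by rewrite cards0 mulr0 mulr_ge0 ?bigmax_ge_id.
rewrite mulrC ler_pM ?ler0n //; first by rewrite ler_nat -[X in (_ <= X)%N]card_ord max_card.
apply: le_trans (cT i iT) _; apply: (bigmax_sup T) => //; exact: (bigmax_sup i).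
Qed.

Lemma r_set0 b X C : r_set b X C 0.
Proof.
exists 0, set0; rewrite mul0r; split=> //; first exact: sub0set.
by move=> i; rewrite inE.
Qed.

Lemma r_X_ge b X C c T : 0 <= c -> T \subset C ->
  (forall i, i \in T -> c <= b i (T :|: X)) -> c * #|T|%:R <= r_X b X C.
Proof. by move=> c0 TC cT; apply: (ub_le_sup (r_set_bounded b X C)); exists c, T. Qed.

Lemma r_X_ge0 b X C : 0 <= r_X b X C.
Proof. by apply: (ub_le_sup (r_set_bounded b X C)); apply: r_set0. Qed.

(* The supremum is attained: otherwise all candidate values stay below a finite maximum,
   itself below [r]. *)
Lemma r_X_witness b X C r : 0 < r -> r <= r_X b X C ->
  exists T, [/\ T \subset C, (0 < #|T|)%N &
    forall i, i \in T -> r <= #|T|%:R * b i (T :|: X)].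
Proof.
move=> r0 le_r; apply/not_existsP => noT.
have low T i : i \in T -> T \subset C -> exists2 j, j \in T & #|T|%:R * b j (T :|: X) < r.
  move=> iT TC.
  case: (pickP [pred j | (j \in T) && (#|T|%:R * b j (T :|: X) < r)]) => [j /andP[]|none].
    by exists j.
  exfalso; apply: (noT T); split=> //; first by apply/card_gt0P; exists i.
  by move=> k kT; have := none k; rewrite /= kT /= => /negbT; rewrite -leNgt.
pose M := \big[Num.max/0]_(T : {set 'I_n})
            \big[Num.max/0]_(i in T | #|T|%:R * b i (T :|: X) < r) (#|T|%:R * b i (T :|: X)).
have M_lt : M < r.
  apply/bigmax_ltP; split=> // T _; apply/bigmax_ltP; split=> //.
  by move=> i /andP[].
suff : r_X b X C <= M by move=> /(le_trans le_r) /(lt_le_trans M_lt); rewrite ltxx.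
apply: ge_sup; first by exists 0; apply: r_set0.
move=> _ [c [T [c0 TC cT ->]]].
have [->|[i iT]] := set_0Vmem T; first by rewrite cards0 mulr0 bigmax_ge_id.
have [j jT ltj] := low T i iT TC.
apply: (bigmax_sup T) => //; apply: (bigmax_sup j); first by rewrite jT.
by rewrite mulrC ler_wpM2l ?cT.
Qed.
End RX.

Section CostSharing.
Variables (R : realType) (n : nat) (A : {set 'I_n}) (r : R).
Implicit Types (b : profile R n) (S B T : {set 'I_n}).

Lemma mem_cs_step b S i :
  (i \in cs_step b A r S) = (i \in S) && (r / #|S|%:R <= b i (S :|: A)).
Proof. by rewrite !inE negb_and -leNgt andbC; case: (i \in S). Qed.

Lemma cs_step_sub b S : cs_step b A r S \subset S.
Proof. exact: subsetDl. Qed.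

Lemma iter_cs_step_sub b B k : iter k (cs_step b A r) B \subset B.
Proof.
elim: k => [|k IH] /=; first exact: subxx.
exact: subset_trans (cs_step_sub _ _) IH.
Qed.

Lemma cs_final_fixed b B : cs_step b A r (cs_final b A B r) = cs_final b A B r.
Proof.
apply: iter_fixed; first exact: cs_step_sub.
by rewrite -[X in (_ <= X)%N]card_ord max_card.
Qed.

Lemma cs_final_price_le b B i : i \in cs_final b A B r ->
  r / #|cs_final b A B r|%:R <= b i (cs_final b A B r :|: A).
Proof. by rewrite -{1}cs_final_fixed mem_cs_step => /andP[]. Qed.

Lemma subset_cs_step b S T : 0 <= r -> T \subset S ->
  (forall i, i \in T -> r <= #|T|%:R * b i (T :|: A)) ->
  (forall i S1 S2, i \in T -> S1 \subset S2 -> b i S1 <= b i S2) ->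
  T \subset cs_step b A r S.
Proof.
move=> r0 TS rT mono; apply/subsetP => i iT.
have T0 : (0 < #|T|)%N by apply/card_gt0P; exists i.
rewrite mem_cs_step (subsetP TS) //=.
apply: le_trans (ler_pdiv_card_subset r0 T0 TS) _.
rewrite ler_pdivrMr ?ltr0n // mulrC (le_trans (rT i iT)) // ler_wpM2l //.
by rewrite mono // setSU.
Qed.

Lemma subset_cs_final b B T : 0 <= r -> T \subset B ->
  (forall i, i \in T -> r <= #|T|%:R * b i (T :|: A)) ->
  (forall i S1 S2, i \in T -> S1 \subset S2 -> b i S1 <= b i S2) ->
  T \subset cs_final b A B r.
Proof.
move=> r0 TB rT mono.
suff sub_iter k : T \subset iter k (cs_step b A r) B by apply: sub_iter.
by elim: k => //= k IH; apply: subset_cs_step.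
Qed.

End CostSharing.

Section Truthfulness.
Variables (R : realType) (n : nat).
Implicit Types (b : profile R n) (S A B C X : {set 'I_n}).

Lemma r_X_agree b1 b2 X C : (forall j, j \in C -> b1 j = b2 j) ->
  r_X b1 X C = r_X b2 X C.
Proof.
move=> agree; congr sup; rewrite funeqE => x; rewrite propeqE.
split=> -[c [T [c0 TC cT ->]]]; exists c, T; split=> // j jT.
  by rewrite -agree ?(subsetP TC) ?cT.
by rewrite agree ?(subsetP TC) ?cT.
Qed.

Variables (b1 b2 : profile R n) (i : 'I_n).
Hypothesis agree : forall j, j != i -> b1 j = b2 j.

Lemma cs_step_agree A r S : (i \in cs_step b1 A r S) = (i \in cs_step b2 A r S) ->
  cs_step b1 A r S = cs_step b2 A r S.
Proof.
move=> same_i; apply/setP => j; have [->//|ji] := eqVneq j i.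
by rewrite !mem_cs_step agree.
Qed.

Lemma cs_final_agree A B r : i \notin B -> cs_final b1 A B r = cs_final b2 A B r.
Proof.
move=> iB; suff iter_agree k :
    iter k (cs_step b1 A r) B = iter k (cs_step b2 A r) B by apply: iter_agree.
elim: k => //= k ->; apply: cs_step_agree.
have iS : i \notin iter k (cs_step b2 A r) B.
  by apply: contra iB; apply/subsetP/iter_cs_step_sub.
by rewrite !mem_cs_step (negbTE iS).
Qed.

(* Until [i] is treated differently, both runs coincide; when [i] stays under [b2] but not
   under [b1], the current set [S] witnesses that [i]'s true value is below the price [r / |S|]. *)
Lemma cs_iter_deviation A B r k :
  let S2 := iter k (cs_step b2 A r) B in
  [\/ S2 = iter k (cs_step b1 A r) B, i \notin S2
    | exists2 S : {set 'I_n}, S2 \subset S & b1 i (S :|: A) < r / #|S|%:R].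
Proof.
elim: k => [|k IH] /=; first exact: Or31.
set S2 := iter k _ B in IH *.
case: IH => [-> | iS2 | [S S2S dropped]].
- have [i2|i2] := boolP (i \in cs_step b2 A r (iter k (cs_step b1 A r) B)); last exact: Or32.
  have [i1|i1] := boolP (i \in cs_step b1 A r (iter k (cs_step b1 A r) B)).
    by apply: Or31; apply/esym/cs_step_agree; rewrite i1 i2.
  apply: Or33; exists (iter k (cs_step b1 A r) B); first exact: cs_step_sub.
  by move: i1 i2; rewrite !mem_cs_step ltNge => /nandP[/negbTE-> | /negbTE->].
- by apply: Or32; apply: contra iS2; apply/subsetP/cs_step_sub.
- apply: Or33; exists S => //; apply: subset_trans _ S2S; exact: cs_step_sub.
Qed.

Lemma cs_final_truthful A B r (S1 := cs_final b1 A B r) (S2 := cs_final b2 A B r) :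
  0 <= r -> (forall U V : {set 'I_n}, U \subset V -> b1 i U <= b1 i V) ->
  (if i \in S2 then b1 i (A :|: S2) - r / #|S2|%:R else 0) <=
  (if i \in S1 then b1 i (A :|: S1) - r / #|S1|%:R else 0).
Proof.
move=> r0 mono.
have truth_ge0 : 0 <= (if i \in S1 then b1 i (A :|: S1) - r / #|S1|%:R else 0).
  by case: ifP => // iS1; rewrite subr_ge0 setUC cs_final_price_le.
case: (cs_iter_deviation A B r n) => [S2E|iS2|[S S2S dropped]].
- by rewrite /S2 /cs_final S2E.
- by rewrite (negbTE iS2).
case: ifP => // iS2; apply: le_trans truth_ge0; rewrite subr_le0.
have S2_0 : (0 < #|S2|)%N by apply/card_gt0P; exists i.
apply: (le_trans (y := b1 i (S :|: A))); first by rewrite setUC mono // setSU.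
exact: le_trans (ltW dropped) (ler_pdiv_card_subset r0 S2_0 S2S).
Qed.

End Truthfulness.

Lemma mech_truthful (R : realType) (n : nat) (p : {ffun 'I_n -> 'I_3}) :
  truthful (@mech R n p).
Proof.
move=> i vi [_ _ vmono _] b bi.
set b1 := upd b i vi; set b2 := upd b i bi.
have agree j : j != i -> b1 j = b2 j by move=> ji; rewrite /b1 /b2 /upd (negbTE ji).
have b1i : b1 i = vi by rewrite /b1 /upd eqxx.
rewrite /utility /mech /=.
set A := grp p 0; set B := grp p 1; set C := grp p 2.
have notin_cs (bb : profile R n) (r : R) : i \notin B -> i \notin cs_final bb A B r.
  by move=> iB; apply: contra iB; apply/subsetP/iter_cs_step_sub.
have r_agree X : i \notin C -> r_X b2 X C = r_X b1 X C.
  by move=> iC; apply: r_X_agree => j jC; apply/esym/agree; apply: contraNneq iC => <-.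
have [iB|iB] := boolP (i \in B); last first.
  have [iC|iC] := boolP (i \in C); last by rewrite !r_agree // (cs_final_agree agree).
  have iA : i \notin A by move: iC; rewrite !inE => /eqP ->.
  by rewrite !in_setU (negbTE iA) !(negbTE (notin_cs _ _ iB)).
have iA : i \notin A by move: iB; rewrite !inE => /eqP ->.
have iC : i \notin C by move: iB; rewrite !inE => /eqP ->.
have r0 : 0 <= Num.max (r_X b1 A C) (r_X b1 B C) by rewrite le_max r_X_ge0.
have drop_if (S : {set 'I_n}) (q : R) :
    (if i \in S then vi (A :|: S) - (if i \in S then q else 0) else 0) =
    (if i \in S then vi (A :|: S) - q else 0) by case: (i \in S).
rewrite !r_agree // !in_setU (negbTE iA) /= !drop_if -b1i.
by apply: (cs_final_truthful agree) r0 _ => U V UV; rewrite b1i vmono.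
Qed.

Section Relabelling.
Variable n : nat.
Implicit Types (p : {ffun 'I_n -> 'I_3}) (S : {set 'I_n}).

Lemma grp_fibre p S (j : 'I_3) : S :&: grp p j = [set x in S | p x == j].
Proof. by apply/setP => x; rewrite !inE. Qed.

Lemma mem_grp_perm p (t : {perm 'I_3}) x :
  [|| x \in grp p (t 0), x \in grp p (t 1) | x \in grp p (t 2)].
Proof.
rewrite !inE; case: (ord3P ((t^-1)%g (p x))) => /(congr1 t); rewrite permKV => ->.
all: by rewrite eqxx ?orbT.
Qed.

Lemma grp_relabel p (t : {perm 'I_3}) (j : 'I_3) :
  grp [ffun x => (t^-1)%g (p x)] j = grp p (t j).
Proof.
apply/setP => x; rewrite !inE ffunE !val_eqE.
by rewrite -(inj_eq (@perm_inj _ t)) permKV.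
Qed.

Lemma sum_grp_relabel (R : realType) (F : {set 'I_n} -> {set 'I_n} -> {set 'I_n} -> R)
    (t : {perm 'I_3}) :
  \sum_(p : {ffun 'I_n -> 'I_3}) F (grp p 0) (grp p 1) (grp p 2) =
  \sum_(p : {ffun 'I_n -> 'I_3}) F (grp p (t 0)) (grp p (t 1)) (grp p (t 2)).
Proof.
rewrite (reindex_inj (h := fun p : {ffun 'I_n -> 'I_3} => [ffun x => (t^-1)%g (p x)])).
  apply: eq_bigr => p _.
  by rewrite -[0%N]/(nat_of_ord (0 : 'I_3)) -[1%N]/(nat_of_ord (1 : 'I_3))
    -[2%N]/(nat_of_ord (2 : 'I_3)) !grp_relabel.
by move=> p q /ffunP pq; apply/ffunP => x; have := pq x; rewrite !ffunE => /perm_inj.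
Qed.

Lemma prod_fibres_amgm (R : realFieldType) p S (t : {perm 'I_3}) :
  4 * \prod_(j < 3) #|[set x in S | p x == j]|%:R <=
  #|S :&: grp p (t 2)|%:R * (#|S|%:R - 1) ^+ 2 :> R.
Proof.
have sum_t : (\sum_(j < 3) #|[set x in S | p x == t j]|)%N = #|S|.
  by rewrite -(sum_card_fibres S p) [RHS](reindex_inj (@perm_inj _ t)).
rewrite (reindex_inj (@perm_inj _ t)) big_ord3 /= mulr1 grp_fibre -sum_t big_ord3 /= addn0 addnA.
exact: amgm3_pred.
Qed.

End Relabelling.

Section Revenue.
Variables (R : realType) (n : nat).
Implicit Types (v : profile R n) (p : {ffun 'I_n -> 'I_3}) (A B C S X Y Z : {set 'I_n}).

Lemma revenue_cs_outcome A S (q : R) :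
  revenue (A :|: S, fun i => if i \in S then q / #|S|%:R else 0) =
  if (0 < #|S|)%N then q else 0.
Proof.
rewrite /revenue /= -big_mkcondr /= (eq_bigl (mem S)) => [|i]; last first.
  by rewrite /= in_setU andb_idl // => ->; rewrite orbT.
rewrite sumr_const; case: posnP => [->|S0]; first by rewrite mulr0n.
by rewrite -[_ *+ _]mulr_natr divfK // pnatr_eq0 -lt0n.
Qed.

Definition target_revenue v A B C : R := Num.max (r_X v A C) (r_X v B C).

(* What [mech] surely collects on the partition (A, B, C): when B together with A can afford the
   target r(C), some nonempty set survives the cost sharing and pays exactly r(C). *)
Definition guaranteed_revenue v A B C : R :=
  if target_revenue v A B C <= r_X v A B then target_revenue v A B C else 0.

Lemma target_revenue_ge0 v A B C : 0 <= target_revenue v A B C.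
Proof. by rewrite le_max r_X_ge0. Qed.

Lemma guaranteed_revenue_ge0 v A B C : 0 <= guaranteed_revenue v A B C.
Proof. by rewrite /guaranteed_revenue; case: ifP => // _; apply: target_revenue_ge0. Qed.

Lemma guaranteed_revenue_le p v :
  (forall i S1 S2, S1 \subset S2 -> v i S1 <= v i S2) ->
  guaranteed_revenue v (grp p 0) (grp p 1) (grp p 2) <= revenue (mech p v).
Proof.
move=> mono; rewrite /mech revenue_cs_outcome -/(target_revenue v _ _ _) /guaranteed_revenue.
set A := grp p 0; set B := grp p 1; set r := target_revenue v A B _.
have r0 : 0 <= r by apply: target_revenue_ge0.
case: ifP => [le_r|_]; last by case: ifP.
have [r_pos|r_le0] := ltP 0 r; last by rewrite (@le_anti _ _ r 0) ?r_le0 //; case: ifP.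
have [T [TB T0 rT]] := r_X_witness r_pos le_r.
have TS := subset_cs_final r0 TB rT (fun i S1 S2 _ => mono i S1 S2).
by rewrite (leq_trans T0 (subset_leq_card TS)).
Qed.

(* [T] is a maximal part of [S ∩ Y] paying [c/2] each together with [X]; by maximality and
   subadditivity the rest [P] pays [c/2] each together with [Z]. *)
Lemma r_X_split v S X Y Z (c : R) : (forall i, valuation_ok i (v i)) -> 0 <= c ->
  (forall i, i \in S -> c <= v i S) -> S \subset X :|: Y :|: Z ->
  c / 2 * #|S :&: Y|%:R <= r_X v X Y + r_X v Z Y.
Proof.
move=> vok c0 cS cover.
have mono i S1 S2 : S1 \subset S2 -> v i S1 <= v i S2 by case: (vok i) => _ _ + _; apply.
have c2 : 0 <= c / 2 by rewrite divr_ge0.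
pose good (U : {set 'I_n}) := (U \subset S :&: Y) && [forall i in U, c / 2 <= v i (U :|: X)].
have good0 : good set0 by rewrite /good sub0set; apply/forall_inP => i; rewrite inE.
have [T /andP[TSY /forall_inP Tc] Tmax] := arg_maxnP (fun U : {set 'I_n} => #|U|) good0.
set P := (S :&: Y) :\: T.
have P_high i : i \in P -> c / 2 <= v i (P :|: Z).
  move=> iP; have /andP[iT iSY] : (i \notin T) && (i \in S :&: Y) by rewrite -in_setD.
  have low : v i ((i |: T) :|: X) < c / 2.
    rewrite ltNge; apply/negP => high.
    have /Tmax : good (i |: T).
      rewrite /good subUset sub1set iSY TSY /=; apply/forall_inP => j.
      rewrite in_setU1 => /predU1P[-> //|jT].
      exact: le_trans (Tc j jT) (mono _ _ _ (setSU _ (subsetUr _ _))).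
    by rewrite cardsU1 iT /= ltnn.
  have iU : i \in ((i |: T) :|: X) :&: (P :|: Z).
    by apply/setIP; split; rewrite ?in_setU ?iP // !inE eqxx.
  have cover' : S \subset ((i |: T) :|: X) :|: (P :|: Z).
    apply/subsetP => x xS; move: (subsetP cover x xS); rewrite !inE xS /=.
    by case: (x \in T); case: (x \in X); case: (x \in Y); case: (x \in Z); rewrite ?orbT.
  have [_ _ _ subadd] := vok i.
  have := le_trans (cS i (subsetP (subsetIl _ _) i iSY)) (mono _ _ _ cover').
  by move: (subadd _ _ iU) low; lra.
have rT : c / 2 * #|T|%:R <= r_X v X Y.
  by apply: r_X_ge => //; apply: subset_trans TSY (subsetIr _ _).
have rP : c / 2 * #|P|%:R <= r_X v Z Y.
  by apply: r_X_ge => //; apply: subset_trans (subsetDl _ _) (subsetIr _ _).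
have card_split : (#|T| + #|P|)%N = #|S :&: Y|.
  by rewrite -(cardsID T (S :&: Y)) (setIidPr TSY).
by rewrite -card_split natrD mulrDr lerD.
Qed.

Lemma best_relabelling v p : exists t : {perm 'I_3},
  let X := grp p (t 0) in let Z := grp p (t 1) in let Y := grp p (t 2) in
  guaranteed_revenue v X Z Y = target_revenue v X Z Y.
Proof.
pose rXZ (t : {perm 'I_3}) := r_X v (grp p (t 0)) (grp p (t 1)).
have [t _ t_max] := @arg_maxP _ _ _ 1%g xpredT rXZ isT; exists t => X Z Y.
pose t01 : {perm 'I_3} := tperm 0 1; pose t02 : {perm 'I_3} := tperm 0 2.
pose t12 : {perm 'I_3} := tperm 1 2.
have XY : r_X v X Y <= r_X v X Z.
  by have := t_max (t12 * t)%g isT; rewrite /rXZ !permM /t12 tpermD // tpermL; apply.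
have ZY : r_X v Z Y <= r_X v X Z.
  have t0 : t02 (t01 0) = 1 by rewrite tpermL tpermD.
  have t1 : t02 (t01 1) = 2 by rewrite tpermR tpermL.
  by have := t_max (t01 * t02 * t)%g isT; rewrite /rXZ !permM t0 t1; apply.
by rewrite /guaranteed_revenue /target_revenue ge_max XY ZY.
Qed.

Lemma prod_fibres_le v p S (c : R) : (forall i, valuation_ok i (v i)) -> 0 <= c ->
  (forall i, i \in S -> c <= v i S) ->
  c * \prod_(j < 3) #|[set x in S | p x == j]|%:R <=
  (#|S|%:R - 1) ^+ 2 *
    \sum_(t : {perm 'I_3}) guaranteed_revenue v (grp p (t 0)) (grp p (t 1)) (grp p (t 2)).
Proof.
move=> vok c0 cS; have [t /=] := best_relabelling v p.
set X := grp p (t 0); set Z := grp p (t 1); set Y := grp p (t 2); move=> G_t.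
set M := target_revenue v X Z Y in G_t.
have M_sum : M <= \sum_(t : {perm 'I_3})
                     guaranteed_revenue v (grp p (t 0)) (grp p (t 1)) (grp p (t 2)).
  rewrite (bigD1 t) //= G_t lerDl sumr_ge0 // => t' _.
  exact: guaranteed_revenue_ge0.
have cover : S \subset X :|: Y :|: Z.
  apply/subsetP => x _; have := mem_grp_perm p t x; rewrite !in_setU.
  by case/or3P => ->; rewrite ?orbT.
have half_Y := r_X_split vok c0 cS cover.
have XY_M : r_X v X Y <= M by rewrite le_max lexx.
have ZY_M : r_X v Z Y <= M by rewrite le_max lexx orbT.
have amgm := prod_fibres_amgm R p S t.
have K0 : 0 <= (#|S|%:R - 1) ^+ 2 :> R by apply: sqr_ge0.
set K := (_ - 1) ^+ 2 in amgm K0 *; set Pi := \prod_(j < 3) _ in amgm *.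
have := ler_wpM2l c0 amgm; have := ler_wpM2r K0 M_sum.
set Sigma := \sum_(t : {perm 'I_3}) _ in M_sum *.
have : c * #|S :&: Y|%:R * K <= 4 * M * K by apply: ler_wpM2r => //; lra.
lra.
Qed.

End Revenue.

Section Benchmark.
Variables (R : realType) (n : nat).

Lemma benchmark_arith (x c Q s : R) : 3 <= x -> 0 <= c -> 0 < Q ->
  c * (x * (x - 1) * (x - 2)) * Q <= (x - 1) ^+ 2 * (6 * s) ->
  c * x <= 324 * ((27 * Q)^-1 * s).
Proof.
move=> x3 c0 Q0 le_cs; have x1 : 0 < x - 1 by lra.
have u0 : 0 <= c * x * Q by rewrite !mulr_ge0 // ?ltW //; lra.
have h1 : c * x * Q * (x - 2) <= 6 * (x - 1) * s.
  rewrite -(ler_pM2l x1).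
  have -> : (x - 1) * (c * x * Q * (x - 2)) = c * (x * (x - 1) * (x - 2)) * Q by ring.
  by have -> : (x - 1) * (6 * (x - 1) * s) = (x - 1) ^+ 2 * (6 * s) by rewrite expr2; ring.
have h2 : c * x * Q * (x - 1) <= 2 * (c * x * Q * (x - 2)).
  have -> : 2 * (c * x * Q * (x - 2)) = c * x * Q * (2 * x - 4) by ring.
  by apply: ler_wpM2l => //; lra.
have -> : 324 * ((27 * Q)^-1 * s) = 12 * s / Q by field; rewrite lt0r_neq0.
by rewrite ler_pdivlMr // -(ler_pM2r x1); lra.
Qed.

Lemma benchmark_le_exp_revenue (v : profile R n) (S : {set 'I_n}) (c : R) :
  (3 <= n)%N -> (forall i, valuation_ok i (v i)) -> 0 <= c -> (3 <= #|S|)%N ->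
  (forall i, i \in S -> c <= v i S) ->
  c * #|S|%:R <= 324 * exp_revenue v.
Proof.
move=> n3 vok c0 S3 cS.
have mono i (S1 S2 : {set 'I_n}) : S1 \subset S2 -> v i S1 <= v i S2.
  by case: (vok i) => _ _ + _; apply.
have sym : \sum_(p : {ffun 'I_n -> 'I_3}) \sum_(t : {perm 'I_3})
             guaranteed_revenue v (grp p (t 0)) (grp p (t 1)) (grp p (t 2)) =
           6 * \sum_(p : {ffun 'I_n -> 'I_3}) guaranteed_revenue v (grp p 0) (grp p 1) (grp p 2).
  rewrite exchange_big /= (eq_bigr _ (fun t _ => esym (sum_grp_relabel _ t))).
  by rewrite sumr_const card_Sn mulr_natl.
have count : \sum_(p : {ffun 'I_n -> 'I_3}) \prod_(j < 3) #|[set x in S | p x == j]|%:R =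
             (#|S| ^_ 3 * 3 ^ (n - 3))%:R :> R.
  have := sum_prod_card_fibres 'I_3 S; rewrite !card_ord => <-.
  by rewrite natr_sum; apply: eq_bigr => p _; rewrite natr_prod.
have key : c * (#|S| ^_ 3 * 3 ^ (n - 3))%:R <=
           (#|S|%:R - 1) ^+ 2 * (6 * \sum_(p : {ffun 'I_n -> 'I_3}) revenue (mech p v)).
  rewrite -count mulr_sumr.
  apply: le_trans (ler_sum _ (fun p _ => prod_fibres_le p vok c0 cS)) _.
  rewrite -mulr_sumr sym; apply: ler_wpM2l; first exact: sqr_ge0.
  by rewrite ler_pM2l //; apply: ler_sum => p _; apply: guaranteed_revenue_le mono.
have ffact3 : (#|S| ^_ 3 = #|S| * (#|S| - 1) * (#|S| - 2))%N.
  by rewrite !ffactnS ffactn0 muln1 mulnA subn1 subn2.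
rewrite ffact3 !natrM !natrB ?(leq_trans _ S3) // in key.
have pow3 : (3 ^ n = 27 * 3 ^ (n - 3))%N by rewrite -[in LHS](subnKC n3) expnD.
rewrite /exp_revenue pow3 natrM.
apply: benchmark_arith => //; first by rewrite ler_nat.
  by rewrite ltr0n expn_gt0.
by rewrite -mulrA.
Qed.

End Benchmark.

Theorem theorem1 (R : realType) (n : nat) (hn : (3 <= n)%N) :
  (forall p : {ffun 'I_n -> 'I_3}, truthful (@mech R n p)) /\
  (forall v : profile R n, (forall i : 'I_n, valuation_ok i (v i)) ->
     F3 v / 324 <= exp_revenue v).
Proof.
split=> [p|v vok]; first exact: mech_truthful.
rewrite ler_pdivrMr // mulrC; apply: ge_sup.
  exists 0, 0, setT; split=> //; first by rewrite cardsT card_ord.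
  - by move=> i _; case: (vok i).
  - by rewrite mul0r.
move=> _ [c [S [c0 S3 cS ->]]].
exact: benchmark_le_exp_revenue.
Qed.
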